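(* For every composition $\alpha$, write $\mathcal{S}_\alpha=\sum_\beta c_\beta M_\beta$ in $\mathsf{QSym}$ and, for each $k$ at least the largest part of $\alpha$, $\mathcal{S}^{(k)}_\alpha=\sum_{\beta\ k\text{-bounded}} c^{(k)}_\beta M_\beta$ in $\mathsf{QSym}^{(k)}$. Then there exists $K$ such that for all $k\ge K$ and all compositions $\beta$ one has $c^{(k)}_\beta=c_\beta$ (in particular $c_\beta=0$ whenever $\beta$ is not $k$-bounded); that is, $\mathcal{S}^{(k)}_\alpha\to\mathcal{S}_\alpha$ as $k\to\infty$.
   Context: Compositions are finite sequences of positive integers (possibly empty $\emptyset$); $k$-bounded means all parts $\le k$; $\lambda(\alpha)$ is the sorted partition. $\mathsf{QSym}$ has basis $M_\alpha$ (monomial quasi-symmetric functions), $\mathsf{NSym}=\mathbb{Q}\langle H_1,H_2,\dots\rangle$ has basis $H_\alpha=H_{\alpha_1}\cdots H_{\alpha_m}$, paired by $\langle M_\alpha,H_\beta\rangle=\delta_{\alpha,\beta}$. $\mathsf{QSym}^{(k)}$ is the quotient of $\mathsf{QSym}$ by the ideal generated by the $M_\alpha$ with some part $>k$, $\mathsf{NSym}_{(k)}$ the subalgebra generated by $H_1,\dots,H_k$, with the induced pairing. Box-adding operators: $t_1(\alpha)=[1,\alpha_1,\dots,\alpha_m]$; for $i\ge2$, $t_i(\alpha)$ replaces the leftmost part equal to $i-1$ by $i$ (undefined if none). $\beta//\alpha$ is a horizontal composition strip of size $n$ if $\beta=t_{i_n}\cdots t_{i_1}(\alpha)$ with $1\le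 i_1<\cdots<i_n$. $\{\mathbf{S}_\alpha\}$ is the unique basis of $\mathsf{NSym}$ with $\mathbf{S}_\emptyset=1$ and $H_i\mathbf{S}_\alpha=\sum_\beta\mathbf{S}_\beta$ ($i\ge1$) over $\beta$ with $\beta//\alpha$ a horizontal composition strip of size $i$; $\{\mathcal{S}_\alpha\}$ (quasi-symmetric Schur functions) is the dual basis of $\mathsf{QSym}$. $k$-conjugation: hook length of cell $(i,j)$ of $\kappa$ is $\kappa_i-j+\kappa'_j-i+1$; a $(k+1)$-core has no cell of hook length $k+1$; $p(\kappa)$ has $i$-th part the number of cells in row $i$ with hook length $\le k$; $p$ is a bijection from $(k+1)$-cores to $k$-bounded partitions with inverse $c$; $\lambda^{\omega_k}=p(c(\lambda)')$. For $k$-bounded $\mu\subseteq\lambda$, $\lambda/\mu$ is a horizontal $k$-strip if no two of its cells share a column, and $\mu^{\omega_k}\subseteq\lambda^{\omega_k}$ with no two cells of $\lambda^{\omega_k}/\mu^{\omega_k}$ in the same row. For $k$-bounded $\alpha,\beta$, $\beta//\alpha$ is a horizontal $k$-composition strip of size $n$ if it is a horizontal composition strip of size $n$ and $\lambda(\beta)/\lambda(\alpha)$ is a horizontal $k$-strip. $\{\mathbf{S}^{(k)}_\alpha\}$ is the unique basis of $\mathsf{NSym}_{(k)}$ with $\mathbf{S}^{(k)}_\emptyset=1$ and $H_i\mathbf{S}^{(k)}_\alpha=\sum_\beta\mathbf{S}^{(k)}_\beta$ ($1\le i\le k$) over $\beta$ with $\beta//\alpha$ a horizontal $k$-composition strip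 of size $i$; $\{\mathcal{S}^{(k)}_\alpha\}$ (quasi-symmetric affine Schur functions) is the dual basis of $\mathsf{QSym}^{(k)}$. *)

From mathcomp Require Import all_boot all_order all_algebra.
From Stdlib Require ClassicalDescription.
Set Implicit Arguments. Unset Strict Implicit. Unset Printing Implicit Defensive.
Import GRing.Theory.

Definition is_comp (a : seq nat) : bool := all (fun x => 0 < x)%N a.
Definition kbounded (k : nat) (a : seq nat) : bool := all (fun x => x <= k)%N a.
Definition maxpart (a : seq nat) : nat := foldr maxn 0%N a.

Fixpoint repl_first (x y : nat) (a : seq nat) : seq nat :=
  match a with
  | [::] => [::]
  | z :: a' => if z == x then y :: a' else z :: repl_first x y a'
  end.

Definition tadd (i : nat) (a : seq nat) : option (seq nat) :=
  if i == 1%N then Some (1%N :: a)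
  else if (2 <= i)%N && (i.-1 \in a) then Some (repl_first i.-1 i a) else None.

(* t_{i_n} ... t_{i_1} (a) for s = [:: i_1; ...; i_n] *)
Definition tapply (s : seq nat) (a : seq nat) : option (seq nat) :=
  foldl (fun o i => obind (tadd i) o) (Some a) s.

Fixpoint incseqs (lo m n : nat) {struct m} : seq (seq nat) :=
  match n, m with
  | 0, _ => [:: [::]]
  | n'.+1, 0 => [::]
  | n'.+1, m'.+1 => [seq lo :: s | s <- incseqs lo.+1 m' n'] ++ incseqs lo.+1 m' n
  end.

(* the (duplicate-free) list of all beta such that beta//a is a horizontal
   composition strip of size n.  Indices i_1 < ... < i_n with i_j >= 1; since
   each t_i creates a part equal to i, parts never decrease and each step
   raises the largest part by at most one, i_n <= maxpart beta <= maxpart a + n,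
   so the bound below loses nothing. *)
Definition hstrips (a : seq nat) (n : nat) : seq (seq nat) :=
  undup (pmap (fun s => tapply s a) (incseqs 1 (maxpart a + n) n)).

(* an element of NSym is given by its coefficients on the basis H_beta *)
Definition nsym := seq nat -> rat.
Definition Hb (b : seq nat) : nsym := fun g => ((g == b)%:R)%R.
(* left multiplication by H_i : H_i H_beta = H_(i :: beta) *)
Definition Hmul (i : nat) (f : nsym) : nsym := fun g =>
  match g with [::] => 0%R | j :: g' => if j == i then f g' else 0%R end.
Definition in_span (P : pred (seq nat)) (f : nsym) : Prop :=
  exists l : seq (seq nat), forall g, f g != 0%R -> (g \in l) && P g.

Definition expands (P : pred (seq nat)) (S : seq nat -> nsym)
    (d : seq nat -> rat) (f : nsym) : Prop :=
  exists l : seq (seq nat),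
    [/\ uniq l, all P l, (forall a, d a != 0%R -> a \in l) &
        forall g, f g = (\sum_(a <- l) d a * S a g)%R].

Definition is_basis (P : pred (seq nat)) (S : seq nat -> nsym) : Prop :=
  [/\ forall a, P a -> in_span P (S a),
      forall f, in_span P f -> exists d, expands P S d f &
      forall f d1 d2, expands P S d1 f -> expands P S d2 f -> forall a, d1 a = d2 a].

(* the basis {bS_alpha} of NSym dual to quasisymmetric Schur functions *)
Definition NSchur_basis (S : seq nat -> nsym) : Prop :=
  [/\ is_basis is_comp S,
      (forall g, S [::] g = Hb [::] g) &
      forall a i, is_comp a -> (0 < i)%N -> forall g,
        Hmul i (S a) g = (\sum_(b <- hstrips a i) S b g)%R].

Definition lam (a : seq nat) : seq nat := sort geq a.
Definition is_part (l : seq nat) : bool := sorted geq l && all (fun x => 0 < x)%N l.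
Definition conj_part (l : seq nat) : seq nat :=
  [seq count (fun x => ltn j x) l | j <- iota 0 (maxpart l)].
(* hook length of cell (i,j), 1-indexed *)
Definition hook (l : seq nat) (i j : nat) : nat :=
  (nth 0 l i.-1 - j) + (nth 0 (conj_part l) j.-1 - i) + 1.
Definition is_core (k : nat) (l : seq nat) : bool :=
  is_part l &&
  all (fun i => all (fun j => hook l i j != k.+1) (iota 1 (nth 0 l i.-1)))
      (iota 1 (size l)).
(* the map p from (k+1)-cores to k-bounded partitions (zero rows dropped) *)
Definition core_to_kbdd (k : nat) (l : seq nat) : seq nat :=
  filter (fun x => 0 < x)%N
    [seq count (fun j => hook l i j <= k)%N (iota 1 (nth 0 l i.-1))
    | i <- iota 1 (size l)].
(* mu = lam^{omega_k} = p(c(lam)'), with c = p^{-1} on (k+1)-cores *)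
Definition is_kconj (k : nat) (la mu : seq nat) : Prop :=
  exists kap, [/\ is_core k kap, core_to_kbdd k kap = la &
                  core_to_kbdd k (conj_part kap) = mu].
Definition part_sub (mu la : seq nat) : bool :=
  (size mu <= size la)%N && all (fun i => nth 0 mu i <= nth 0 la i)%N (iota 0 (size mu)).
Definition horiz_strip (mu la : seq nat) : bool :=
  part_sub mu la &&
  all (fun j => nth 0 (conj_part la) j <= (nth 0 (conj_part mu) j).+1)%N
      (iota 0 (maxpart la)).
Definition hkstrip (k : nat) (mu la : seq nat) : Prop :=
  [/\ is_part mu && kbounded k mu, is_part la && kbounded k la,
      horiz_strip mu la &
      exists muw law, [/\ is_kconj k mu muw, is_kconj k la law,
        part_sub muw law &
        all (fun i => nth 0 law i <= (nth 0 muw i).+1)%N (iota 0 (size law))]].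

Definition pbool (P : Prop) : bool :=
  if ClassicalDescription.excluded_middle_informative P then true else false.

Definition kcomp (k : nat) : pred (seq nat) := fun a => is_comp a && kbounded k a.

Definition kNSchur_basis (k : nat) (S : seq nat -> nsym) : Prop :=
  [/\ is_basis (kcomp k) S,
      (forall g, S [::] g = Hb [::] g) &
      forall a i, kcomp k a -> (0 < i <= k)%N -> forall g,
        Hmul i (S a) g =
        (\sum_(b <- hstrips a i | kbounded k b && pbool (hkstrip k (lam a) (lam b)))
           S b g)%R].

From mathcomp Require Import all_boot all_order all_algebra.
From mathcomp Require Import zify.
Set Implicit Arguments. Unset Strict Implicit.

(* Both coefficients are obtained by iterating Pieri rules along [beta]: the
   coefficient of [S_alpha] in [H_beta] counts chains of strips from the empty
   composition to [alpha] whose sizes are the parts of [beta].  A strip of size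
   [i] raises the size by [i], so both coefficients vanish unless
   [|alpha| = |beta|].  Take [K = |alpha| + 1].  If [beta] is not [k]-bounded,
   then [|beta| > k >= |alpha|].  Otherwise every composition met along a chain
   has size at most [k]; a partition of size at most [k] has all hooks at most
   [k], so it is its own [(k+1)]-core and its [k]-conjugate is its conjugate.
   Hence every horizontal composition strip met is a horizontal
   [k]-composition strip, and the two Pieri rules give the same coefficients. *)

(* [col_len a t] is the length of column [t.+1] of the diagram of [lam a], so
   [horiz_cols a b] says that [lam b / lam a] is a horizontal strip. *)
Definition col_len (a : seq nat) (t : nat) : nat := count (fun x => t < x) a.

Definition horiz_cols (a b : seq nat) : Prop :=
  forall t, col_len a t <= col_len b t <= (col_len a t).+1.

Lemma perm_repl_first x y a :
  x \in a -> perm_eq (x :: repl_first x y a) (y :: a).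
Proof.
elim: a => [|z a IH] //=; rewrite in_cons.
case: (z =P x) => [->|ne]; first by move=> _; apply/permP => p /=; rewrite addnCA.
rewrite eq_sym (introF eqP ne) => /IH /permP C.
by apply/permP => p; have := C p => /=; lia.
Qed.

Lemma tadd_spec j a a' : tadd j a = Some a' ->
  [/\ 0 < j, is_comp a -> is_comp a', sumn a' = (sumn a).+1 &
      forall t, col_len a' t = col_len a t + (j.-1 == t)].
Proof.
rewrite /tadd; case: eqP => [-> [<-]|_].
  by split=> // t; rewrite /col_len /= addnC; case: t.
case: andP => // -[j2 ja] [<-].
have ja' := perm_repl_first j ja.
split=> [|ca||t]; first exact: ltnW.
- have := perm_all (fun x => 0 < x) ja'.
  by rewrite /= (ltnW j2) -[all _ a]/(is_comp a) ca => /andP [].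
- by have := perm_sumn ja' => /=; lia.
- have := permP ja' (fun x => t < x); rewrite /col_len /=.
  by case: (ltngtP t j.-1) => h; case: (j.-1 =P t) => e /=; lia.
Qed.

Lemma tapply_spec s a b : tapply s a = Some b ->
  [/\ all (fun j => 0 < j) s, is_comp a -> is_comp b, sumn b = sumn a + size s &
      forall t, col_len b t = col_len a t + count (fun j => j.-1 == t) s].
Proof.
rewrite /tapply; elim: s a => [|i s IH] a /=.
  by case=> <-; split=> // [|t]; rewrite addn0.
case E: (tadd i a) => [a'|]; last first.
  by have -> : forall s, foldl (fun o j => obind (tadd j) o) None s = None by elim.
case/IH=> [s_pos a'b b_sum b_cols]; case: (tadd_spec E) => [i_pos aa' a'_sum a'_cols].
split=> [|/aa'/a'b //||t]; first by rewrite i_pos.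
- by rewrite b_sum a'_sum; lia.
- by rewrite b_cols a'_cols; lia.
Qed.

Lemma incseqs_spec lo m n s : s \in incseqs lo m n ->
  [/\ size s = n, uniq s & all (fun x => lo <= x) s].
Proof.
elim: m lo n s => [|m IH] lo [|n] s //=; rewrite ?inE; try by move/eqP->.
rewrite mem_cat => /orP [/mapP [s' /IH [ss us ls] ->]|/IH [ss us ls]].
  split=> /=; first by rewrite ss.
    by rewrite us andbT; apply/negP => /(allP ls); rewrite ltnn.
  by rewrite leqnn; apply/allP => x /(allP ls) /ltnW.
by split=> //; apply/allP => x /(allP ls) /ltnW.
Qed.

Lemma count_pred_eq_le1 s t :
  uniq s -> all (fun j => 0 < j) s -> count (fun j => j.-1 == t) s <= 1.
Proof.
move=> us ps; rewrite (@eq_in_count _ _ (pred1 t.+1)); last first.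
  by move=> [|j] /(allP ps).
by rewrite count_uniq_mem //; case: (_ \in _).
Qed.

Lemma mem_hstrips a i b : b \in hstrips a i ->
  [/\ is_comp a -> is_comp b, sumn b = sumn a + i & horiz_cols a b].
Proof.
rewrite mem_undup mem_pmap => /mapP [s /incseqs_spec [ss us ps]].
move=> /esym /tapply_spec [_ ab b_sum b_cols]; split=> // [|t]; first by rewrite b_sum ss.
by rewrite b_cols leq_addr /=; have := count_pred_eq_le1 t us ps; lia.
Qed.

Lemma has_gt_maxpart l j : has (fun x => j < x) l = (j < maxpart l).
Proof. by elim: l => //= x l ->; rewrite leq_max. Qed.

Lemma col_len_maxpart l j : maxpart l <= j -> col_len l j = 0.
Proof.
by move=> h; apply/eqP; rewrite -leqn0 leqNgt -has_count has_gt_maxpart -leqNgt.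
Qed.

Lemma maxpart_le_col_len a b :
  (forall t, col_len a t <= col_len b t) -> maxpart a <= maxpart b.
Proof.
move=> H; case E: (maxpart a) => [//|n].
have := has_gt_maxpart a n; rewrite E ltnSn has_count => h.
by rewrite -has_gt_maxpart has_count (leq_trans h (H n)).
Qed.

Lemma nth_le_maxpart l i : nth 0 l i <= maxpart l.
Proof.
elim: l i => [|x l IH] [|i] //=; rewrite ?nth_nil // leq_max ?leqnn //.
by rewrite IH orbT.
Qed.

Lemma size_conj_part l : size (conj_part l) = maxpart l.
Proof. by rewrite size_map size_iota. Qed.

Lemma nth_conj_part l j : nth 0 (conj_part l) j = col_len l j.
Proof.
case: (ltnP j (maxpart l)) => h; first by rewrite (nth_map 0) ?size_iota ?nth_iota.
by rewrite nth_default ?size_conj_part // col_len_maxpart.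
Qed.

Lemma conj_part_pos l : all (fun x => 0 < x) (conj_part l).
Proof.
apply/allP => x /mapP [j]; rewrite mem_iota => /andP [_ h] ->.
by rewrite -has_count has_gt_maxpart.
Qed.

Lemma mem_le_sumn x a : x \in a -> x <= sumn a.
Proof. by elim: a => //= y a IH; rewrite in_cons => /orP [/eqP ->|/IH]; lia. Qed.

Lemma kbounded_sumn k a : sumn a <= k -> kbounded k a.
Proof. by move=> ak; apply/allP => x /mem_le_sumn; lia. Qed.

Lemma size_le_sumn l : all (fun x => 0 < x) l -> size l <= sumn l.
Proof. by elim: l => //= x l IH /andP [x0 /IH]; lia. Qed.

Lemma size_maxpart_le_sumn l :
  all (fun x => 0 < x) l -> size l + maxpart l <= (sumn l).+1.
Proof.
elim: l => //= x l IH /andP [x0 lp].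
by have := IH lp; have := size_le_sumn lp; lia.
Qed.

Definition hooks_le (k : nat) (X : seq nat) : Prop :=
  forall i j, 0 < i <= size X -> 0 < j <= nth 0 X i.-1 -> hook X i j <= k.

Lemma hook_le_size X i j : hook X i j <= (nth 0 X i.-1 - j) + (size X - i) + 1.
Proof. by rewrite /hook nth_conj_part /col_len; have := count_size (fun x => j.-1 < x) X; lia. Qed.

Lemma hooks_le_small k l : all (fun x => 0 < x) l -> sumn l <= k -> hooks_le k l.
Proof.
move=> lp lk i j ? ?; have := hook_le_size l i j.
by have := nth_le_maxpart l i.-1; have := size_maxpart_le_sumn lp; lia.
Qed.

Lemma hooks_le_conj_part k l :
  all (fun x => 0 < x) l -> sumn l <= k -> hooks_le k (conj_part l).
Proof.
move=> lp lk i j; rewrite size_conj_part nth_conj_part /col_len => ? ?.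
have := hook_le_size (conj_part l) i j; rewrite size_conj_part nth_conj_part /col_len.
by have := count_size (fun x => i.-1 < x) l; have := size_maxpart_le_sumn lp; lia.
Qed.

Lemma core_to_kbdd_id k X :
  hooks_le k X -> all (fun x => 0 < x) X -> core_to_kbdd k X = X.
Proof.
move=> Xk Xp; rewrite /core_to_kbdd -[in RHS](all_filterP Xp); congr filter.
transitivity [seq nth 0 X i.-1 | i <- iota 1 (size X)]; last first.
  by rewrite (iotaDl 1 0) -map_comp (@eq_map _ _ _ (nth 0 X)) // map_nth_iota0 ?take_size.
apply/eq_in_map => i; rewrite mem_iota => /andP [i1 iX].
rewrite -[in RHS](size_iota 1 (nth 0 X i.-1)); apply/eqP; rewrite -all_count.
by apply/allP => j; rewrite mem_iota => /andP [j1 j2]; apply: Xk; lia.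
Qed.

Lemma is_core_hooks_le k X : is_part X -> hooks_le k X -> is_core k X.
Proof.
move=> Xp Xk; rewrite /is_core Xp; apply/allP => i; rewrite mem_iota => /andP [i1 i2].
apply/allP => j; rewrite mem_iota => /andP [j1 j2].
by rewrite neq_ltn ltnS Xk //; lia.
Qed.

Lemma is_kconj_small k l : is_part l -> sumn l <= k -> is_kconj k l (conj_part l).
Proof.
move=> /[dup] lpart /andP [_ lp] lk; exists l; split.
- exact: is_core_hooks_le (hooks_le_small lp lk).
- exact: core_to_kbdd_id (hooks_le_small lp lk) lp.
- exact: core_to_kbdd_id (hooks_le_conj_part lp lk) (conj_part_pos l).
Qed.

Lemma lt_nth_sorted l t i :
  sorted geq l -> (t < nth 0 l i) = (i < col_len l t).
Proof.
elim: l i => [|x l IH] i /=; first by rewrite nth_nil; case: i.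
have geq_trans : transitive geq by move=> ? ? ? /[swap]; apply: leq_trans.
rewrite (path_sortedE geq_trans) => /andP [/allP lx sl].
case tx: (t < x); first by case: i => [|i] //=; rewrite IH // add1n ltnS.
have l0 : col_len l t = 0.
  apply/eqP; rewrite -leqn0 leqNgt -has_count; apply/hasPn => y /lx yx.
  by rewrite -leqNgt (leq_trans yx) // leqNgt tx.
by case: i => [|i] /=; rewrite ?tx ?IH // l0.
Qed.

Lemma part_sub_sorted mu la :
  sorted geq mu -> sorted geq la -> all (fun x => 0 < x) mu ->
  (forall t, col_len mu t <= col_len la t) -> part_sub mu la.
Proof.
move=> smu sla pmu cols; apply/andP; split.
  move: pmu; rewrite all_count => /eqP <-.
  exact: leq_trans (cols 0) (count_size _ _).
apply/allP => i _; rewrite leqNgt; apply/negP => lt_la_mu.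
move: (lt_la_mu); rewrite (lt_nth_sorted _ _ smu) => /leq_trans/(_ (cols _)).
by rewrite -lt_nth_sorted // ltnn.
Qed.

Lemma part_sub_conj_part mu la :
  (forall t, col_len mu t <= col_len la t) -> part_sub (conj_part mu) (conj_part la).
Proof.
move=> cols; rewrite /part_sub !size_conj_part maxpart_le_col_len //=.
by apply/allP => j _; rewrite !nth_conj_part.
Qed.

Lemma col_len_lam a t : col_len (lam a) t = col_len a t.
Proof. by apply/permP; rewrite perm_sort. Qed.

Lemma lam_part a : is_comp a -> is_part (lam a).
Proof.
move=> ca; rewrite /is_part /lam all_sort -/(is_comp a) ca andbT.
by apply: sort_sorted => x y; apply: leq_total.
Qed.

Lemma sumn_lam a : sumn (lam a) = sumn a.
Proof. by apply/perm_sumn; rewrite perm_sort. Qed.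

Lemma hkstrip_small k a b : is_comp a -> is_comp b -> sumn a <= k -> sumn b <= k ->
  horiz_cols a b -> hkstrip k (lam a) (lam b).
Proof.
move=> ca cb ak bk ab.
have lo t : col_len (lam a) t <= col_len (lam b) t by rewrite !col_len_lam; case/andP: (ab t).
have hi t : col_len (lam b) t <= (col_len (lam a) t).+1.
  by rewrite !col_len_lam; case/andP: (ab t).
have [pa pb] := (lam_part ca, lam_part cb).
have [/andP [sa posa] /andP [sb _]] := (pa, pb).
have [ak' bk'] : sumn (lam a) <= k /\ sumn (lam b) <= k by rewrite !sumn_lam.
split; rewrite ?pa ?pb ?kbounded_sumn //.
- rewrite /horiz_strip part_sub_sorted //.
  by apply/allP => j _; rewrite !nth_conj_part hi.
- exists (conj_part (lam a)), (conj_part (lam b)); split.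
  + exact: is_kconj_small.
  + exact: is_kconj_small.
  + exact: part_sub_conj_part.
  + by apply/allP => j _; rewrite !nth_conj_part hi.
Qed.

Lemma pboolT (P : Prop) : P -> pbool P.
Proof. by rewrite /pbool; case: ClassicalDescription.excluded_middle_informative. Qed.

Definition pieri (i : nat) (a : seq nat) : seq (seq nat) := hstrips a i.

Definition kpieri (k i : nat) (a : seq nat) : seq (seq nat) :=
  [seq b <- hstrips a i | kbounded k b && pbool (hkstrip k (lam a) (lam b))].

Lemma pieri_sumn i a : all (fun b => sumn b == sumn a + i) (pieri i a).
Proof. by apply/allP => b /mem_hstrips [_ -> _]. Qed.

Lemma pieri_comp i a : is_comp a -> all is_comp (pieri i a).
Proof. by move=> ca; apply/allP => b /mem_hstrips [/(_ ca)]. Qed.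

Lemma kpieri_sumn k i a : all (fun b => sumn b == sumn a + i) (kpieri k i a).
Proof.
by apply/allP => b; rewrite mem_filter => /andP [_]; apply: (allP (pieri_sumn i a)).
Qed.

Lemma kpieri_small k i a : is_comp a -> sumn a + i <= k -> kpieri k i a = pieri i a.
Proof.
move=> ca aik; apply/all_filterP/allP => b /mem_hstrips [/(_ ca) cb bsum ab].
have bk : sumn b <= k by rewrite bsum.
by rewrite kbounded_sumn //; apply/pboolT/hkstrip_small => //; lia.
Qed.

Local Open Scope ring_scope.
Import GRing.Theory.

Lemma Hb_cons i beta g : Hb (i :: beta) g = Hmul i (Hb beta) g.
Proof. by rewrite /Hb; case: g => [|j g] //=; rewrite eqseq_cons; case: (j == i). Qed.

Lemma Hmul_lin i (f : nsym) (l : seq (seq nat)) (c : seq nat -> rat) (F : seq nat -> nsym) :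
  (forall g, f g = \sum_(a <- l) c a * F a g) ->
  forall g, Hmul i f g = \sum_(a <- l) c a * Hmul i (F a) g.
Proof.
move=> fE [|j g] /=; last case: (j == i); rewrite ?fE //.
all: by rewrite big1 // => a _; rewrite mulr0.
Qed.

Lemma sum_mem_indicator (F : seq nat -> rat) (r l : seq (seq nat)) :
  uniq r -> uniq l -> {subset r <= l} ->
  \sum_(b <- l) (b \in r)%:R * F b = \sum_(b <- r) F b.
Proof.
move=> ur ul rl; under eq_bigr => b _ do rewrite mulr_natl mulrb.
rewrite -big_mkcond -big_filter; apply/perm_big/uniq_perm; rewrite ?filter_uniq //.
by move=> b; rewrite mem_filter andb_idr //; apply: rl.
Qed.

Section PieriExpansion.

Variable R : nat -> seq nat -> seq (seq nat).

Fixpoint pieri_supp (beta : seq nat) : seq (seq nat) :=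
  if beta is i :: beta' then undup (flatten [seq R i a | a <- pieri_supp beta'])
  else [:: [::]].

Fixpoint pieri_coef (beta : seq nat) : seq nat -> rat :=
  if beta is i :: beta' then
    fun b => \sum_(a <- pieri_supp beta') pieri_coef beta' a * (b \in R i a)%:R
  else fun a => (a == [::])%:R.

Lemma mem_pieri_supp i beta b :
  (b \in pieri_supp (i :: beta)) = has (fun a => b \in R i a) (pieri_supp beta).
Proof. by rewrite mem_undup; apply/flatten_mapP/hasP => -[a]; exists a. Qed.

Lemma pieri_supp_uniq beta : uniq (pieri_supp beta).
Proof. by case: beta => //= *; apply: undup_uniq. Qed.

Lemma pieri_coef_supp beta b : pieri_coef beta b != 0 -> b \in pieri_supp beta.
Proof.
case: beta => [|i beta] /=; first by rewrite inE; case: (b == [::]) => //; rewrite eqxx.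
apply: contraR; rewrite mem_pieri_supp => /hasPn bR.
by rewrite big1_seq // => a /andP [_ /bR /negbTE ->]; rewrite mulr0.
Qed.

Lemma pieri_supp_all (P : pred (seq nat)) (Q : pred nat) :
  P [::] -> (forall i a, Q i -> P a -> all P (R i a)) ->
  forall beta, all Q beta -> all P (pieri_supp beta).
Proof.
move=> P0 RP; elim=> [|i beta IH] /=; first by rewrite P0.
move=> /andP [Qi /IH /allP Pbeta]; apply/allP => b; rewrite mem_pieri_supp.
by case/hasP => a /Pbeta Pa; apply: (allP (RP i a Qi Pa)).
Qed.

Hypothesis R_sumn : forall i a, all (fun b => sumn b == (sumn a + i)%N) (R i a).

Lemma pieri_supp_sumn beta a : a \in pieri_supp beta -> sumn a = sumn beta.
Proof.
elim: beta a => [|i beta IH] a /=; first by rewrite inE => /eqP ->.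
rewrite mem_pieri_supp => /hasP [a' /IH <- /(allP (R_sumn i a')) /eqP ->].
by rewrite addnC.
Qed.

Lemma pieri_coef_eq0 beta a : sumn a != sumn beta -> pieri_coef beta a = 0.
Proof. by apply: contraNeq => /pieri_coef_supp /pieri_supp_sumn ->. Qed.

Section Expansion.

Variables (P : pred (seq nat)) (Q : pred nat) (S : seq nat -> nsym).
Hypothesis P_nil : P [::].
Hypothesis S_nil : forall g, S [::] g = Hb [::] g.
Hypothesis R_basis : forall i a, Q i -> P a -> uniq (R i a) && all P (R i a).
Hypothesis S_pieri : forall i a, Q i -> P a ->
  forall g, Hmul i (S a) g = \sum_(b <- R i a) S b g.

Lemma Hb_pieri beta : all Q beta ->
  forall g, Hb beta g = \sum_(a <- pieri_supp beta) pieri_coef beta a * S a g.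
Proof.
have R_P i a : Q i -> P a -> all P (R i a) by move=> Qi Pa; case/andP: (R_basis Qi Pa).
elim: beta => [_ g|i beta IH /andP [Qi Qbeta] g] /=.
  by rewrite big_seq1 eqxx mul1r S_nil.
have Pbeta := allP (pieri_supp_all P_nil R_P Qbeta).
rewrite Hb_cons (Hmul_lin i (IH Qbeta)); symmetry.
under eq_bigr => b _ do rewrite big_distrl; rewrite exchange_big /=.
apply: eq_big_seq => a aS; have Pa := Pbeta a aS; rewrite S_pieri // big_distrr /=.
case/andP: (R_basis Qi Pa) => uR _.
rewrite -(sum_mem_indicator (fun b => pieri_coef beta a * S b g) uR (pieri_supp_uniq (i :: beta))).
  by apply: eq_bigr => b _; rewrite mulrCA mulrA.
by move=> b bR; rewrite mem_pieri_supp; apply/hasP; exists a.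
Qed.

Lemma expands_pieri beta : all Q beta -> expands P S (pieri_coef beta) (Hb beta).
Proof.
move=> Qbeta; exists (pieri_supp beta); split.
- exact: pieri_supp_uniq.
- by apply: pieri_supp_all Qbeta => // i a Qi Pa; case/andP: (R_basis Qi Pa).
- exact: pieri_coef_supp.
- exact: Hb_pieri.
Qed.

End Expansion.

End PieriExpansion.

Lemma pieri_agree (P : pred (seq nat)) R1 R2 n :
  P [::] -> (forall i a, P a -> all P (R1 i a)) ->
  (forall i a, all (fun b => sumn b == (sumn a + i)%N) (R1 i a)) ->
  (forall i a, P a -> (sumn a + i <= n)%N -> R1 i a = R2 i a) ->
  forall beta, (sumn beta <= n)%N ->
  pieri_supp R1 beta = pieri_supp R2 beta /\ pieri_coef R1 beta =1 pieri_coef R2 beta.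
Proof.
move=> P0 R1P R1sumn R12; elim=> [//|i beta IH] /= beta_n.
have [suppE coefE] := IH (leq_trans (leq_addl _ _) beta_n).
have RE a : a \in pieri_supp R1 beta -> R1 i a = R2 i a.
  move=> /[dup] aR /(pieri_supp_sumn R1sumn) asum; apply: R12; last by rewrite asum addnC.
  exact: allP (pieri_supp_all P0 (fun i a _ => R1P i a) (all_predT beta)) a aR.
rewrite -suppE; split; first by congr undup; congr flatten; apply/eq_in_map.
by move=> b; apply: eq_big_seq => a aR; rewrite coefE RE.
Qed.

Lemma NSchur_coef S beta d : NSchur_basis S -> is_comp beta ->
  expands is_comp S d (Hb beta) -> d =1 pieri_coef pieri beta.
Proof.
move=> [[_ _ uniq_coef] S_nil S_pieri] cbeta Sd; apply: uniq_coef Sd _.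
apply: expands_pieri cbeta => // [i a _ ca | i a i_gt0 ca].
- by rewrite undup_uniq pieri_comp.
- exact: S_pieri.
Qed.

Lemma kNSchur_coef k S beta d : kNSchur_basis k S -> kcomp k beta ->
  expands (kcomp k) S d (Hb beta) -> d =1 pieri_coef (kpieri k) beta.
Proof.
move=> [[_ _ uniq_coef] S_nil S_pieri] /andP [pbeta kbeta] Sd.
apply: uniq_coef Sd _; apply: (expands_pieri (Q := fun i => 0 < i <= k)%N) => //.
- move=> i a _ /andP [ca _]; rewrite filter_uniq ?undup_uniq //=.
  apply/allP => b; rewrite mem_filter => /andP [/andP [kb _] ab].
  by rewrite /kcomp kb andbT (allP (pieri_comp i ca)).
- by move=> i a ik ka g; rewrite S_pieri // big_filter.
- by apply/allP => x xb; rewrite (allP pbeta x xb) (allP kbeta x xb).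
Qed.

Unset Implicit Arguments.
Theorem mainTheorem6 (S : seq nat -> nsym) (Sk : nat -> seq nat -> nsym) :
  NSchur_basis S ->
  (forall k, (0 < k)%N -> kNSchur_basis k (Sk k)) ->
  forall alpha, is_comp alpha ->
  exists K : nat, forall k, (K <= k)%N -> (maxpart alpha <= k)%N ->
  forall beta, is_comp beta ->
  forall d dk : seq nat -> rat,
    expands is_comp S d (Hb beta) ->
    (kbounded k beta -> expands (kcomp k) (Sk k) dk (Hb beta)) ->
    (if kbounded k beta then dk alpha else 0) = d alpha.
Proof.
move=> SB SkB alpha _; exists (sumn alpha).+1 => k alpha_k _ beta cbeta d dk Sd Skdk.
rewrite (NSchur_coef SB cbeta Sd).
have [kbeta|k_unbounded] := boolP (kbounded k beta); last first.
  have k_beta : (k < sumn beta)%N by rewrite ltnNge (contra (@kbounded_sumn k beta)).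
  by rewrite (pieri_coef_eq0 pieri_sumn) //; apply/eqP; lia.
have k_gt0 : (0 < k)%N by lia.
have kcbeta : kcomp k beta by rewrite /kcomp cbeta.
rewrite (kNSchur_coef (SkB k k_gt0) kcbeta (Skdk kbeta)).
have [beta_k|k_beta] := leqP (sumn beta) k.
  have [_ ->] // := pieri_agree (P := is_comp) (R2 := kpieri k) erefl pieri_comp pieri_sumn
    (fun i a ca aik => esym (kpieri_small ca aik)) beta_k.
have alpha_beta : sumn alpha != sumn beta by apply/eqP; lia.
by rewrite (pieri_coef_eq0 (kpieri_sumn k) alpha_beta) (pieri_coef_eq0 pieri_sumn alpha_beta).
Qed.
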